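(* Under the standing assumptions, for $0\le j\le n-1$, $$\mathbf m_j=Q_{2,j}(a)^{-1}\,\Gamma_{1,j}(a),\qquad \mathbf l_j=-\Gamma_{1,j+1}(a)^{-1}\,Q_{2,j}(a).$$ In particular $\mathbf m_0=Q_{2,0}(a)^{-1}$.
   Context: Let $q,n\in\mathbb N$ and let $a<b$ be real numbers. All matrices are complex; $I_q$, $0_q$ are the $q\times q$ identity and zero matrices. Let $s_0,\dots,s_{2n+1}$ be Hermitian $q\times q$ matrices and set $\widehat s_j:=-ab\,s_j+(a+b)s_{j+1}-s_{j+2}$. Define $H_{1,j}:=(s_{l+k})_{l,k=0}^j$, $H_{2,j}:=(\widehat s_{l+k})_{l,k=0}^{j}$, $K_{1,j}:=(bs_{l+k}-s_{l+k+1})_{l,k=0}^{j}$, $K_{2,j}:=(-as_{l+k}+s_{l+k+1})_{l,k=0}^j$. Standing assumption: $H_{1,n},H_{2,n-1},K_{1,n},K_{2,n}$ are positive definite. Let $T_0:=0_q$ and, for $j\ge1$, let $T_j$ be the $(j+1)\times(j+1)$ block matrix (blocks $q\times q$) with $I_q$ in block positions $(l+1,l)$, $l=0,\dots,j-1$, and $0_q$ elsewhere; $R_j(z):=(I_{(j+1)q}-zT_j)^{-1}$; $v_j:=\mathrm{col}(I_q,0_q,\dots,0_q)\in\mathbb C^{(j+1)q\times q}$. Let $u_{2,0}:=-(a+b)s_0+s_1$, $u_{2,j}:=\mathrm{col}(u_{2,0},-\widehat s_0,\dots,-\widehat s_{j-1})$; for $j\ge1$, $Y_{2,j}:=\mathrm{col}(\widehat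 s_j,\dots,\widehat s_{2j-1})$, $\widetilde Y_{1,j}:=\mathrm{col}(bs_j-s_{j+1},\dots,bs_{2j-1}-s_{2j})$. Polynomials: $Q_{2,0}(z):=-(u_{2,0}+zs_0)$, $\Gamma_{1,0}:=I_q$; for $j\ge1$: $Q_{2,j}(z):=-(-Y_{2,j}^*H_{2,j-1}^{-1},I_q)R_j(z)(u_{2,j}+zv_js_0)$, $\Gamma_{1,j}(z):=(-\widetilde Y_{1,j}^*K_{1,j-1}^{-1},I_q)R_j(z)v_j$. DSM parameters: $\lambda_j:=(u_{2,j}+av_js_0)^*R_j(a)^*H_{2,j}^{-1}R_j(a)(u_{2,j}+av_js_0)$, $\mu_j:=v_j^*R_j(a)^*K_{1,j}^{-1}R_j(a)v_j$; $\mathbf l_0:=\lambda_0$, $\mathbf l_j:=\lambda_j-\lambda_{j-1}$ ($1\le j\le n-1$); $\mathbf m_0:=\mu_0$, $\mathbf m_j:=\mu_j-\mu_{j-1}$ ($1\le j\le n$). *)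

(* Complex matrices are modelled over an arbitrary
   numClosedFieldType C (e.g. algC, or the complex numbers). *)
From HB Require Import structures.
From mathcomp Require Import all_boot all_order all_algebra.
Set Implicit Arguments. Unset Strict Implicit. Unset Printing Implicit Defensive.
Import Order.TTheory GRing.Theory Num.Theory.
Local Open Scope ring_scope.

Section Defs.
Variable C : numClosedFieldType.

Definition ctmx m n (A : 'M[C]_(m, n)) : 'M[C]_(n, m) := (map_mx Num.conj A)^T.

Definition hermmx n (A : 'M[C]_n) : Prop := ctmx A = A.

Definition posdef n (A : 'M[C]_n) : Prop :=
  hermmx A /\ forall x : 'cV[C]_n, x != 0 -> 0 < (ctmx x *m A *m x) 0 0.

Variable q : nat.

Definition bd (m : nat) : nat := (\sum_(i < m) q)%N.

Definition hankel (m : nat) (f : nat -> 'M[C]_q) : 'M[C]_(bd m) :=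
  @mxblock C m m (fun _ => q) (fun _ => q) (fun l k => f (l + k)%N).

Definition bcol (m : nat) (F : nat -> 'M[C]_q) : 'M[C]_(bd m, q) :=
  @mxcol C m (fun _ => q) q (fun l => F (l : nat)).

Definition brow (m : nat) (F : nat -> 'M[C]_q) : 'M[C]_(q, bd m) :=
  @mxrow C m (fun _ => q) q (fun l => F (l : nat)).

Definition Tmx (j : nat) : 'M[C]_(bd j.+1) :=
  @mxblock C j.+1 j.+1 (fun _ => q) (fun _ => q)
    (fun l k => if (l : nat) == k.+1 then 1%:M else 0).

Definition Rmx (j : nat) (z : C) : 'M[C]_(bd j.+1) := invmx (1%:M - z *: Tmx j).

Definition vmx (j : nat) : 'M[C]_(bd j.+1, q) :=
  bcol j.+1 (fun l => if l == 0%N then 1%:M else 0).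

Lemma bd_recr (j : nat) : (bd j + q)%N = bd j.+1.
Proof. by rewrite /bd big_ord_recr. Qed.

Definition rowI (j : nat) (X : 'M[C]_(q, bd j)) : 'M[C]_(q, bd j.+1) :=
  castmx (erefl q, bd_recr j) (row_mx X 1%:M).

Variables (s : nat -> 'M[C]_q) (a b : C).

Definition shat (j : nat) : 'M[C]_q :=
  - (a * b) *: s j + (a + b) *: s j.+1 - s j.+2.

Definition H1 (j : nat) := hankel j.+1 s.
Definition H2 (j : nat) := hankel j.+1 shat.
Definition K1 (j : nat) := hankel j.+1 (fun i => b *: s i - s i.+1).
Definition K2 (j : nat) := hankel j.+1 (fun i => - a *: s i + s i.+1).

Definition u20 : 'M[C]_q := - (a + b) *: s 0 + s 1.
Definition u2 (j : nat) : 'M[C]_(bd j.+1, q) :=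
  bcol j.+1 (fun l => if l is l'.+1 then - shat l' else u20).

Definition Y2 (j : nat) : 'M[C]_(bd j, q) := bcol j (fun l => shat (j + l)).
Definition Yt1 (j : nat) : 'M[C]_(bd j, q) :=
  bcol j (fun l => b *: s (j + l)%N - s (j + l).+1).

Definition Q2 (j : nat) (z : C) : 'M[C]_q :=
  match j with
  | 0 => - (u20 + z *: s 0)
  | j'.+1 => - (rowI (- (ctmx (Y2 j'.+1) *m invmx (H2 j')))
                 *m Rmx j'.+1 z *m (u2 j'.+1 + z *: (vmx j'.+1 *m s 0)))
  end.

Definition Gamma1 (j : nat) (z : C) : 'M[C]_q :=
  match j with
  | 0 => 1%:M
  | j'.+1 => rowI (- (ctmx (Yt1 j'.+1) *m invmx (K1 j')))
               *m Rmx j'.+1 z *m vmx j'.+1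
  end.

Definition lambda (j : nat) : 'M[C]_q :=
  let w := u2 j + a *: (vmx j *m s 0) in
  ctmx w *m ctmx (Rmx j a) *m invmx (H2 j) *m Rmx j a *m w.

Definition mu (j : nat) : 'M[C]_q :=
  ctmx (vmx j) *m ctmx (Rmx j a) *m invmx (K1 j) *m Rmx j a *m vmx j.

Definition lbold (j : nat) : 'M[C]_q :=
  if j is j'.+1 then lambda j'.+1 - lambda j' else lambda 0.
Definition mbold (j : nat) : 'M[C]_q :=
  if j is j'.+1 then mu j'.+1 - mu j' else mu 0.

End Defs.

From HB Require Import structures.
From mathcomp Require Import all_boot all_order all_algebra.
From mathcomp Require Import zify ring.
Set Implicit Arguments. Unset Strict Implicit. Unset Printing Implicit Defensive.
Import Order.TTheory GRing.Theory Num.Theory.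
Local Open Scope ring_scope.

(* Put k_i := b s_i - s_(i+1) and h_i := shat_i = k_(i+1) - a k_i, so that
   K_(1,j) and H_(2,j) are the block Hankel matrices of k and h, i.e. the Gram
   matrices of the forms <c, d>_k, <c, d>_h on matrix polynomials.  Multiplying
   out R_j(a): Gamma_(1,j)(a) is the value at a of the monic k-orthogonal
   polynomial p_j = [monicK j], Q_(2,j)(a) the 0-th k-moment of the monic
   h-orthogonal polynomial r_j = [monicH j], mu_j the value at a of the
   polynomial z_j = [reprK j] whose first j+1 k-moments are a^i, and lambda_j
   the 0-th k-moment of the polynomial y_j = [reprH j] whose first j+1
   h-moments are k_i.  As the h-moments of r_j vanish below j, its k-moments
   are a^i Q_(2,j)(a); computing <r_j, p_j>_k in two ways gives
   Q_(2,j)(a) Gamma_(1,j)(a)^* = <p_j, p_j>_k, which is invertible, and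
   z_j - z_(j-1) - Q_(2,j)(a)^-1 p_j has no k-moments up to degree j, so it
   vanishes by definiteness.  Likewise <r_j, p_(j+1)>_k = 0 yields
   <r_j, r_j>_h = - Q_(2,j)(a) Gamma_(1,j+1)(a)^*, and
   y_j - y_(j-1) + Gamma_(1,j+1)(a)^-1 r_j vanishes.  Only the definiteness of
   H_(2,n-1) and K_(1,n) is needed. *)

Section ConjugateTranspose.
Variable C : numClosedFieldType.

Lemma ctmxM m n p (A : 'M[C]_(m, n)) (B : 'M[C]_(n, p)) :
  ctmx (A *m B) = ctmx B *m ctmx A.
Proof. by rewrite /ctmx map_mxM trmx_mul. Qed.

Lemma ctmxK m n (A : 'M[C]_(m, n)) : ctmx (ctmx A) = A.
Proof. by apply/matrixP=> i j; rewrite !mxE conjCK. Qed.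

Lemma ctmxD m n (A B : 'M[C]_(m, n)) : ctmx (A + B) = ctmx A + ctmx B.
Proof. by apply/matrixP=> i j; rewrite !mxE rmorphD. Qed.

Lemma ctmxN m n (A : 'M[C]_(m, n)) : ctmx (- A) = - ctmx A.
Proof. by apply/matrixP=> i j; rewrite !mxE rmorphN. Qed.

Lemma ctmxB m n (A B : 'M[C]_(m, n)) : ctmx (A - B) = ctmx A - ctmx B.
Proof. by rewrite ctmxD ctmxN. Qed.

Lemma ctmxZ m n x (A : 'M[C]_(m, n)) : ctmx (x *: A) = x^* *: ctmx A.
Proof. by apply/matrixP=> i j; rewrite !mxE rmorphM. Qed.

Lemma ctmx0 m n : ctmx (0 : 'M[C]_(m, n)) = 0.
Proof. by apply/matrixP=> i j; rewrite !mxE conjC0. Qed.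

Lemma ctmx1 m : ctmx (1%:M : 'M[C]_m) = 1%:M.
Proof.
by apply/matrixP=> i j; rewrite !mxE eq_sym; case: (_ == _); rewrite ?conjC0 ?conjC1.
Qed.

Lemma ctmx_sum m n I (r : seq I) (P : pred I) (F : I -> 'M[C]_(m, n)) :
  ctmx (\sum_(i <- r | P i) F i) = \sum_(i <- r | P i) ctmx (F i).
Proof. by elim/big_rec2: _ => [|i x y _ <-]; rewrite ?ctmx0 ?ctmxD. Qed.

End ConjugateTranspose.

(* A block row with [m] blocks of width [q] is identified with the sequence of
   its blocks, extended by [0] beyond [m]; this is the coefficient sequence of
   a matrix polynomial of degree [< m]. *)
Section BlockSequences.
Variables (C : numClosedFieldType) (q : nat).
Local Notation bd := (bd q).

Definition mxrow_seq r m (c : nat -> 'M[C]_(r, q)) : 'M[C]_(r, bd m) :=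
  @mxrow C m (fun _ => q) r (fun l => c l).
Definition mxcol_seq r m (c : nat -> 'M[C]_(q, r)) : 'M[C]_(bd m, r) :=
  @mxcol C m (fun _ => q) r (fun l => c l).
Definition blocks r m (X : 'M[C]_(r, bd m)) : nat -> 'M[C]_(r, q) :=
  fun l => oapp (fun i => @submxrow C m (fun _ => q) r X i) 0 (insub l).

Lemma blocks_mxrow_seq r m c l :
  @blocks r m (mxrow_seq m c) l = if (l < m)%N then c l else 0.
Proof.
rewrite /blocks; case: insubP => [i -> <-|/negbTE -> //] /=.
by rewrite /mxrow_seq mxrowK.
Qed.

Lemma mxrow_seq_blocks r m (X : 'M[C]_(r, bd m)) : mxrow_seq m (blocks X) = X.
Proof.
apply/mxrowP => i; rewrite mxrowK /blocks insubT //= => Hi.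
by have -> : Sub (val i) Hi = i by apply: val_inj.
Qed.

Lemma blocks_ge r m (X : 'M[C]_(r, bd m)) l : (m <= l)%N -> blocks X l = 0.
Proof. by move=> ml; rewrite /blocks insubF // ltnNge ml. Qed.

Lemma blocks0 r m l : blocks (0 : 'M[C]_(r, bd m)) l = 0.
Proof.
rewrite /blocks; case: insub => [i|] //=.
by apply/matrixP => u v; rewrite !mxE.
Qed.

Lemma blocksN r m (X : 'M[C]_(r, bd m)) l : blocks (- X) l = - blocks X l.
Proof. by rewrite /blocks; case: insub => [i|] /=; rewrite ?submxrowN ?oppr0. Qed.

Lemma eq_mxrow_seq r m (c d : nat -> 'M[C]_(r, q)) :
  (forall l, (l < m)%N -> c l = d l) -> mxrow_seq m c = mxrow_seq m d.
Proof. by move=> cd; apply: eq_mxrow => i; apply: cd. Qed.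

Lemma eq_mxcol_seq r m (c d : nat -> 'M[C]_(q, r)) :
  (forall l, (l < m)%N -> c l = d l) -> mxcol_seq m c = mxcol_seq m d.
Proof. by move=> cd; apply: eq_mxcol => i; apply: cd. Qed.

Lemma ctmx_mxrow_seq r m c :
  ctmx (@mxrow_seq r m c) = mxcol_seq m (fun l => ctmx (c l)).
Proof. by apply/matrixP => i j; rewrite !mxE. Qed.

Lemma ctmx_mxcol_seq r m c :
  ctmx (@mxcol_seq r m c) = mxrow_seq m (fun l => ctmx (c l)).
Proof. by apply/matrixP => i j; rewrite !mxE. Qed.

Lemma mul_mxrow_seq_mxcol_seq r r' m c d :
  @mxrow_seq r m c *m @mxcol_seq r' m d = \sum_(l < m) c l *m d l.
Proof. exact: mul_mxrow_mxcol. Qed.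

Lemma mul_mxrow_seq_hankel r m c f :
  @mxrow_seq r m c *m hankel m f =
  mxrow_seq m (fun i => \sum_(l < m) c l *m f (l + i)%N).
Proof. by rewrite /mxrow_seq /hankel mul_mxrow_mxblock. Qed.

Lemma mxcol_seq_mul r r' m c (A : 'M[C]_(r, r')) :
  @mxcol_seq r m c *m A = mxcol_seq m (fun l => c l *m A).
Proof. exact: mxcol_mul. Qed.

Lemma mxcol_seqD r m c d :
  @mxcol_seq r m c + mxcol_seq m d = mxcol_seq m (fun l => c l + d l).
Proof. by apply/matrixP => i j; rewrite !mxE. Qed.

Lemma mxcol_seqN r m c : - @mxcol_seq r m c = mxcol_seq m (fun l => - c l).
Proof. by apply/matrixP => i j; rewrite !mxE. Qed.

Lemma mxcol_seqZ r m x c :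
  x *: @mxcol_seq r m c = mxcol_seq m (fun l => x *: c l).
Proof. by apply/matrixP => i j; rewrite !mxE. Qed.

End BlockSequences.

Section BlockIndices.
Variables (C : numClosedFieldType) (q : nat).
Local Notation bd := (bd q).
Local Notation sig1 := (@tagnat.sig1 _ (fun _ => q)).
Local Notation sig2 := (@tagnat.sig2 _ (fun _ => q)).
Local Notation Rank := (@tagnat.Rank _ (fun _ => q)).

Lemma bdE m : bd m = (m * q)%N.
Proof. by rewrite /bd sum_nat_const card_ord. Qed.

Lemma sum_const_ord_lt m l :
  (l <= m)%N -> (\sum_(k < m | (k < l)%N) q)%N = (l * q)%N.
Proof.
move=> lm; rewrite -(big_mkord (fun k => k < l)%N (fun _ => q)).
by rewrite -(big_nat_widen 0 l m xpredT) // big_mkord sum_nat_const card_ord.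
Qed.

Lemma bd_indexE m (t : 'I_(bd m)) : val t = (sig1 t * q + sig2 t)%N.
Proof. by rewrite [LHS](tagnat.rect t) sum_const_ord_lt // ltnW. Qed.

Lemma RankE m (l : 'I_m) (t : 'I_q) : val (Rank l t) = (l * q + t)%N.
Proof. by rewrite [LHS]tagnat.RankEsum sum_const_ord_lt // ltnW. Qed.

Lemma blocksE r m (X : 'M[C]_(r, bd m)) (l : 'I_m) i w :
  blocks X l i w = X i (Rank l w).
Proof.
rewrite /blocks insubT //= => Hl.
by rewrite (_ : Sub (val l) Hl = l) ?mxE //; apply: val_inj.
Qed.

Lemma rowI_mxrow_seq j (X : 'M[C]_(q, bd j)) :
  rowI X = mxrow_seq j.+1
    (fun l => if (l < j)%N then blocks X l else if l == j then 1%:M else 0).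
Proof.
apply/matrixP => i t; rewrite mxE castmxE mxE /=.
set s := sig1 t; set w := sig2 t.
have Ht : (t : nat) = (s * q + w)%N := bd_indexE t.
have wq := ltn_ord w.
case: splitP => [u|u] /= Hu.
  have uj : (u < j * q)%N by rewrite -bdE ltn_ord.
  have sj : (s < j)%N.
    rewrite ltnNge; apply/negP => js.
    have : (j * q <= s * q)%N by rewrite leq_mul2r js orbT.
    lia.
  rewrite sj (_ : s = Ordinal sj :> nat) // blocksE cast_ord_id.
  by congr (X i _); apply: val_inj; rewrite RankE /=; lia.
have uq := ltn_ord u.
have Hu' : (t : nat) = (j * q + u)%N by rewrite -bdE.
have sj : (s : nat) = j.
  have : ((s * q + w) %/ q = (j * q + u) %/ q)%N by rewrite -Ht Hu'.
  by rewrite !divnMDl ?divn_small ?addn0 //; lia.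
rewrite sj ltnn eqxx !mxE cast_ord_id.
by have -> : u = w :> 'I_q by apply: val_inj => /=; lia.
Qed.

Lemma Tmx_upper j (s t : 'I_(bd j.+1)) : (s <= t)%N -> Tmx C q j s t = 0.
Proof.
move=> st; rewrite /Tmx mxE.
have Hs := bd_indexE s; have Ht := bd_indexE t.
case: eqP => [e|_]; last by rewrite mxE.
exfalso; move: Hs Ht; rewrite e.
have := ltn_ord (sig2 s); have := ltn_ord (sig2 t).
move: (sig1 t : nat) => x; simpl; nia.
Qed.

End BlockIndices.

Section ShiftMatrix.
Variables (C : numClosedFieldType) (q : nat).

Lemma Tmx_mxcol_seq r j (G : nat -> 'M[C]_(q, r)) :
  Tmx C q j *m mxcol_seq j.+1 G =
  mxcol_seq j.+1 (fun l => if l is l'.+1 then G l' else 0).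
Proof.
rewrite /Tmx /mxcol_seq mul_mxblock_mxrow; apply: eq_mxcol => -[[|i] Hi] /=.
  by rewrite big1 // => k _; rewrite mul0mx.
rewrite (bigD1 (Ordinal (ltnW Hi))) //= eqxx mul1mx big1 ?addr0 // => k Hk.
rewrite ifF ?mul0mx // eqSS.
by apply: contraNF Hk => /eqP e; apply/eqP/val_inj.
Qed.

Lemma det_1_subZ_Tmx j (a : C) : \det (1%:M - a *: Tmx C q j) = 1.
Proof.
have E s t : (1%:M - a *: Tmx C q j) s t = (s == t)%:R - a * Tmx C q j s t.
  by rewrite !mxE.
rewrite det_trig.
  by rewrite big1 // => i _; rewrite E (Tmx_upper C (leqnn i)) eqxx mulr0 subr0.
apply/is_trig_mxP => i k ik.
by rewrite E (Tmx_upper C (ltnW ik)) -(inj_eq val_inj) /= (ltn_eqF ik) mulr0 subr0.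
Qed.

Lemma unitmx_1_subZ_Tmx j (a : C) : (1%:M - a *: Tmx C q j) \in unitmx.
Proof. by rewrite unitmxE det_1_subZ_Tmx unitr1. Qed.

Lemma mul_1_subZ_Tmx r j (a : C) (G : nat -> 'M[C]_(q, r)) :
  (1%:M - a *: Tmx C q j) *m mxcol_seq j.+1 G =
  mxcol_seq j.+1 (fun l => G l - a *: (if l is l'.+1 then G l' else 0)).
Proof.
by rewrite mulmxBl mul1mx -scalemxAl Tmx_mxcol_seq mxcol_seqZ mxcol_seqN mxcol_seqD.
Qed.

Lemma vmxE j : vmx C q j = mxcol_seq j.+1 (fun l => if l == 0%N then 1%:M else 0).
Proof. by []. Qed.

Lemma Rmx_vmx j (a : C) :
  Rmx q j a *m vmx C q j = mxcol_seq j.+1 (fun l => a ^+ l *: 1%:M).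
Proof.
have E : (1%:M - a *: Tmx C q j) *m mxcol_seq j.+1 (fun l => a ^+ l *: 1%:M) =
         vmx C q j.
  rewrite mul_1_subZ_Tmx vmxE; apply: eq_mxcol_seq => -[|l] _ /=.
    by rewrite expr0 scaler0 subr0 scale1r.
  by rewrite scalerA -exprS subrr.
by rewrite /Rmx -E mulKmx // unitmx_1_subZ_Tmx.
Qed.

End ShiftMatrix.

(* Matrix polynomials are coefficient sequences [c : nat -> 'M_(r, q)] vanishing
   from [N] on.  For a moment sequence [f], [mom f c i] is the [i]-th moment of
   [c] and [hform f c d] is the sesquilinear form [sum_(l,i) c_l f_(l+i) d_i^*]
   whose Gram matrices are the block Hankel matrices of [f]. *)
Section Moments.
Variables (C : numClosedFieldType) (q N : nat).

Definition mom r (f : nat -> 'M[C]_q) (c : nat -> 'M[C]_(r, q)) i : 'M[C]_(r, q) :=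
  \sum_(l < N) c l *m f (l + i)%N.

Definition hform r r' f (c : nat -> 'M[C]_(r, q)) (d : nat -> 'M[C]_(r', q)) :
  'M[C]_(r, r') := \sum_(i < N) mom f c i *m ctmx (d i).

Definition peval r (a : C) (c : nat -> 'M[C]_(r, q)) : 'M[C]_(r, q) :=
  \sum_(l < N) a ^+ l *: c l.

Definition deg_lt r (c : nat -> 'M[C]_(r, q)) m := forall l, (m <= l)%N -> c l = 0.

Definition hform_definite f m :=
  forall r (c : nat -> 'M[C]_(r, q)), deg_lt c m -> hform f c c = 0 -> forall l, c l = 0.

Lemma deg_ltS r (c : nat -> 'M[C]_(r, q)) m : deg_lt c m -> deg_lt c m.+1.
Proof. by move=> dc l ml; apply/dc/ltnW. Qed.

Lemma sum_ord_single (V : zmodType) (F : nat -> V) j : (j < N)%N ->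
  (forall i, i != j -> F i = 0) -> \sum_(i < N) F i = F j.
Proof.
move=> jN F0; rewrite (bigD1 (Ordinal jN)) //= big1 ?addr0 // => i ne.
by apply: F0; apply: contra ne => /eqP e; apply/eqP/val_inj.
Qed.

Lemma sum_ord_trunc (V : zmodType) (F : nat -> V) m : (m <= N)%N ->
  (forall i, (m <= i)%N -> F i = 0) -> \sum_(i < N) F i = \sum_(i < m) F i.
Proof.
move=> mN F0; rewrite -(subnKC mN) big_split_ord /= [X in _ + X]big1 ?addr0 //.
by move=> i _; apply: F0; apply: leq_addr.
Qed.

Lemma eq_mom r f (c c' : nat -> 'M[C]_(r, q)) i :
  (forall l, c l = c' l) -> mom f c i = mom f c' i.
Proof. by move=> cc'; apply: eq_bigr => l _; rewrite cc'. Qed.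

Lemma mom0 r f i : mom f (fun _ => 0 : 'M[C]_(r, q)) i = 0.
Proof. by rewrite /mom big1 // => l _; rewrite mul0mx. Qed.

Lemma mom_mull r r' f (A : 'M[C]_(r', r)) (c : nat -> 'M[C]_(r, q)) i :
  mom f (fun l => A *m c l) i = A *m mom f c i.
Proof. by rewrite /mom mulmx_sumr; apply: eq_bigr => l _; rewrite mulmxA. Qed.

Lemma momD r f (c d : nat -> 'M[C]_(r, q)) i :
  mom f (fun l => c l + d l) i = mom f c i + mom f d i.
Proof. by rewrite /mom -big_split; apply: eq_bigr => l _; rewrite mulmxDl. Qed.

Lemma momN r f (c : nat -> 'M[C]_(r, q)) i : mom f (fun l => - c l) i = - mom f c i.
Proof. by rewrite /mom -sumrN; apply: eq_bigr => l _; rewrite mulNmx. Qed.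

Lemma momB r f (c d : nat -> 'M[C]_(r, q)) i :
  mom f (fun l => c l - d l) i = mom f c i - mom f d i.
Proof. by rewrite momD momN. Qed.

Lemma hform_mull r r' r'' f (A : 'M[C]_(r'', r)) c (d : nat -> 'M[C]_(r', q)) :
  hform f (fun l => A *m c l) d = A *m hform f c d.
Proof. by rewrite /hform mulmx_sumr; apply: eq_bigr => i _; rewrite mom_mull mulmxA. Qed.

Lemma hformD r r' f (c c' : nat -> 'M[C]_(r, q)) (d : nat -> 'M[C]_(r', q)) :
  hform f (fun l => c l + c' l) d = hform f c d + hform f c' d.
Proof. by rewrite /hform -big_split; apply: eq_bigr => i _; rewrite momD mulmxDl. Qed.

Lemma hformN r r' f (c : nat -> 'M[C]_(r, q)) (d : nat -> 'M[C]_(r', q)) :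
  hform f (fun l => - c l) d = - hform f c d.
Proof. by rewrite /hform -sumrN; apply: eq_bigr => i _; rewrite momN mulNmx. Qed.

Lemma hformB r r' f (c c' : nat -> 'M[C]_(r, q)) (d : nat -> 'M[C]_(r', q)) :
  hform f (fun l => c l - c' l) d = hform f c d - hform f c' d.
Proof. by rewrite hformD hformN. Qed.

Lemma hform_momE r r' f (c : nat -> 'M[C]_(r, q)) (d : nat -> 'M[C]_(r', q)) g j :
  deg_lt d j.+1 -> (forall i, (i <= j)%N -> mom f c i = g i) ->
  hform f c d = \sum_(i < N) g i *m ctmx (d i).
Proof.
move=> dd cg; apply: eq_bigr => i _.
by case: (leqP i j) => ij; [rewrite cg | rewrite dd // ctmx0 !mulmx0].
Qed.

Lemma hform_monic r f (c : nat -> 'M[C]_(r, q)) (d : nat -> 'M[C]_q) j :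
  (j < N)%N -> deg_lt d j.+1 -> d j = 1%:M ->
  (forall i, (i < j)%N -> mom f c i = 0) -> hform f c d = mom f c j.
Proof.
move=> jN dd dj c0.
rewrite /hform (@sum_ord_single _ (fun i => mom f c i *m ctmx (d i)) j) //.
  by rewrite dj ctmx1 mulmx1.
move=> i ne; case: (ltngtP i j) => [ij|ji|e]; last by rewrite e eqxx in ne.
  by rewrite c0 // mul0mx.
by rewrite dd // ctmx0 mulmx0.
Qed.

Lemma hform_orth r r' f (c : nat -> 'M[C]_(r, q)) (d : nat -> 'M[C]_(r', q)) j :
  deg_lt d j -> (forall i, (i < j)%N -> mom f c i = 0) -> hform f c d = 0.
Proof.
move=> dd c0; rewrite /hform big1 // => i _.
by case: (ltnP i j) => ij; [rewrite c0 // mul0mx | rewrite dd // ctmx0 mulmx0].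
Qed.

Lemma ctmx_hform r r' f (c : nat -> 'M[C]_(r, q)) (d : nat -> 'M[C]_(r', q)) m :
  (forall i, (i <= 2 * m)%N -> ctmx (f i) = f i) -> deg_lt c m.+1 -> deg_lt d m.+1 ->
  ctmx (hform f c d) = hform f d c.
Proof.
move=> fH dc dd; rewrite /hform /mom ctmx_sum.
under eq_bigr do rewrite ctmxM ctmxK ctmx_sum mulmx_sumr.
rewrite exchange_big /=; apply: eq_bigr => l _; rewrite mulmx_suml.
apply: eq_bigr => i _; rewrite ctmxM mulmxA.
case: (leqP l m) => lm; last by rewrite dc // ctmx0 !mulmx0.
case: (leqP i m) => im; last by rewrite dd // !mul0mx.
by rewrite addnC fH //; lia.
Qed.

Lemma ctmx_peval r (a : C) (c : nat -> 'M[C]_(r, q)) :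
  a^* = a -> ctmx (peval a c) = \sum_(l < N) a ^+ l *: ctmx (c l).
Proof.
move=> aR; rewrite /peval ctmx_sum; apply: eq_bigr => l _.
by rewrite ctmxZ rmorphXn /= aR.
Qed.

Lemma peval0 r (a : C) : peval a (fun _ => 0 : 'M[C]_(r, q)) = 0.
Proof. by rewrite /peval big1 // => l _; rewrite scaler0. Qed.

Lemma hform_geometric r (a : C) f j (c : nat -> 'M[C]_(r, q)) (p : nat -> 'M[C]_q) B :
  a^* = a -> deg_lt p j.+1 -> (forall i, (i <= j)%N -> mom f c i = a ^+ i *: B) ->
  hform f c p = B *m ctmx (peval a p).
Proof.
move=> aR dp cB; rewrite (hform_momE dp cB) ctmx_peval // mulmx_sumr.
by apply: eq_bigr => i _; rewrite -scalemxAl scalemxAr.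
Qed.

Lemma mom_shift r (a : C) k h (c : nat -> 'M[C]_(r, q)) i :
  (forall i, h i = k i.+1 - a *: k i) -> mom h c i = mom k c i.+1 - a *: mom k c i.
Proof.
move=> hk; rewrite /mom scaler_sumr -sumrB; apply: eq_bigr => l _.
by rewrite hk addnS mulmxBr scalemxAr.
Qed.

Lemma mom_geometric (a : C) k h j (c : nat -> 'M[C]_q) :
  (forall i, h i = k i.+1 - a *: k i) -> (forall i, (i < j)%N -> mom h c i = 0) ->
  forall i, (i <= j)%N -> mom k c i = a ^+ i *: mom k c 0.
Proof.
move=> hk c0; elim => [|i IH] ij; first by rewrite expr0 scale1r.
have /eqP := mom_shift c i hk; rewrite c0 // eq_sym subr_eq0 => /eqP ->.
by rewrite IH 1?ltnW // scalerA exprS.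
Qed.

Lemma definite_mom_eq0 f m j r (c : nat -> 'M[C]_(r, q)) :
  hform_definite f m -> (j < m)%N -> deg_lt c j.+1 ->
  (forall i, (i <= j)%N -> mom f c i = 0) -> forall l, c l = 0.
Proof.
move=> fD jm dc c0; apply: fD; last by apply: (hform_orth (j := j.+1)).
by move=> l ml; apply: dc; apply: leq_trans ml.
Qed.

Lemma row_kernel0_unitmx n (A : 'M[C]_n) : (forall v : 'rV_n, v *m A = 0 -> v = 0) ->
  A \in unitmx.
Proof.
move=> A_inj; rewrite -row_free_unit -kermx_eq0; apply/eqP/row_matrixP => i.
by rewrite row0; apply: A_inj; rewrite -row_mul mulmx_ker row0.
Qed.

Lemma unitmx_mom_monic f m j (c : nat -> 'M[C]_q) :
  hform_definite f m -> (j < m)%N -> deg_lt c j.+1 -> c j = 1%:M ->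
  (forall i, (i < j)%N -> mom f c i = 0) -> mom f c j \in unitmx.
Proof.
move=> fD jm dc cj c0; apply: row_kernel0_unitmx => u uc.
have duc : deg_lt (fun l => u *m c l) j.+1 by move=> l jl; rewrite dc // mulmx0.
have uc0 i : (i <= j)%N -> mom f (fun l => u *m c l) i = 0.
  rewrite leq_eqVlt mom_mull => /predU1P [->|ij] //.
  by rewrite c0 // mulmx0.
by have := definite_mom_eq0 fD jm duc uc0 j; rewrite cj mulmx1.
Qed.

End Moments.

Section ChristoffelIdentities.
Variables (C : numClosedFieldType) (q N : nat) (a : C) (k h : nat -> 'M[C]_q).
Variables (j : nat) (p p' r z z' y y' : nat -> 'M[C]_q).
Hypothesis aR : a^* = a.
Hypothesis hk : forall i, h i = k i.+1 - a *: k i.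
Hypothesis kH : forall i, (i <= 2 * j.+1)%N -> ctmx (k i) = k i.
Hypothesis hH : forall i, (i <= 2 * j)%N -> ctmx (h i) = h i.
Hypothesis kD : hform_definite N k j.+1.
Hypothesis hD : hform_definite N h j.+1.
Hypothesis jN : (j.+1 < N)%N.
Hypotheses (dp : deg_lt p j.+1) (pj : p j = 1%:M).
Hypothesis p0 : forall i, (i < j)%N -> mom N k p i = 0.
Hypotheses (dp' : deg_lt p' j.+2) (p'j : p' j.+1 = 1%:M).
Hypothesis p'0 : forall i, (i <= j)%N -> mom N k p' i = 0.
Hypotheses (dr : deg_lt r j.+1) (rj : r j = 1%:M).
Hypothesis r0 : forall i, (i < j)%N -> mom N h r i = 0.
Hypotheses (dz : deg_lt z j.+1) (dz' : deg_lt z' j).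
Hypothesis zE : forall i, (i <= j)%N -> mom N k z i = a ^+ i *: 1%:M.
Hypothesis z'E : forall i, (i < j)%N -> mom N k z' i = a ^+ i *: 1%:M.
Hypotheses (dy : deg_lt y j.+1) (dy' : deg_lt y' j).
Hypothesis yE : forall i, (i <= j)%N -> mom N h y i = k i.
Hypothesis y'E : forall i, (i < j)%N -> mom N h y' i = k i.

Local Notation Q := (mom N k r 0).
Local Notation mom := (mom N).
Local Notation hform := (hform N).
Local Notation peval := (peval N a).

Let jN' : (j < N)%N. Proof. exact: ltnW. Qed.
Let kH' i : (i <= 2 * j)%N -> ctmx (k i) = k i.
Proof. by move=> ij; apply: kH; lia. Qed.

Let hrr : hform h r r = mom h r j.
Proof. exact: hform_monic. Qed.
Let hH_rr : ctmx (mom h r j) = mom h r j.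
Proof. by rewrite -hrr (ctmx_hform N hH dr dr). Qed.

Lemma mom_second_kind_peval : Q *m ctmx (peval p) = mom k p j.
Proof.
have kpp : hform k p p = mom k p j by apply: hform_monic.
have kpr : hform k p r = mom k p j by apply: hform_monic.
have kH_pp : ctmx (mom k p j) = mom k p j by rewrite -kpp (ctmx_hform N kH' dp dp).
rewrite -(hform_geometric aR dp (mom_geometric hk r0)) -(ctmx_hform N kH' dp dr).
by rewrite kpr kH_pp.
Qed.

Lemma unitmx_mom_second_kind : Q \in unitmx.
Proof.
have /andP [] // : (Q \in unitmx) && (ctmx (peval p) \in unitmx).
by rewrite -unitmx_mul mom_second_kind_peval (unitmx_mom_monic kD).
Qed.

Lemma peval_reproducing_sub : peval z - peval z' = invmx Q *m peval p.
Proof.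
pose d l := (z l - z' l) - invmx Q *m p l.
have dd : deg_lt d j.+1.
  by move=> l jl; rewrite /d dz ?dz' ?dp // 1?ltnW // mulmx0 subrr subr0.
have d0 i : (i < j)%N -> mom k d i = 0.
  move=> ij; rewrite momB mom_mull momB zE 1?ltnW // z'E // p0 //.
  by rewrite mulmx0 subrr subr0.
have d_eq0 : forall l, d l = 0.
  apply: (definite_mom_eq0 kD (ltnSn j) dd) => i.
  rewrite leq_eqVlt => /predU1P [->|]; last exact: d0.
  rewrite -(hform_monic jN' dp pj d0) hformB hform_mull hformB.
  rewrite (hform_geometric aR dp zE) mul1mx.
  have -> : hform k z' p = 0.
    by rewrite -(ctmx_hform N kH' dp (deg_ltS dz')) (hform_orth dz' p0) ctmx0.
  rewrite (hform_monic jN' dp pj p0) -mom_second_kind_peval.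
  by rewrite mulKmx ?unitmx_mom_second_kind // subr0 subrr.
rewrite /peval -sumrB mulmx_sumr; apply: eq_bigr => l _; rewrite -scalerBr.
by have /eqP := d_eq0 l; rewrite subr_eq0 => /eqP ->; rewrite scalemxAr.
Qed.

Lemma mom_second_kind_last : mom h r j = - (Q *m ctmx (peval p')).
Proof.
have dr' : deg_lt r j.+2 by apply: deg_ltS.
have rk := mom_geometric hk r0.
have rk_last : mom k r j.+1 = a ^+ j.+1 *: Q + mom h r j.
  by rewrite (mom_shift N r j hk) (rk j) // scalerA -exprS addrC subrK.
have krp'0 : hform k r p' = 0.
  by rewrite -(ctmx_hform N kH dp' dr') (hform_orth dr p'0) ctmx0.
have krp' : hform k r p' = Q *m ctmx (peval p') + mom h r j.
  rewrite (hform_momE (g := fun i => a ^+ i *: Q + (i == j.+1)%:R *: mom h r j) dp').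
    under eq_bigr do rewrite mulmxDl.
    rewrite big_split (ctmx_peval N _ aR) mulmx_sumr /=; congr (_ + _).
      by apply: eq_bigr => i _; rewrite -scalemxAl scalemxAr.
    pose P i := ((i == j.+1)%:R *: mom h r j) *m ctmx (p' i).
    rewrite (@sum_ord_single _ _ P _ jN) /P ?eqxx ?scale1r ?p'j ?ctmx1 ?mulmx1 //.
    by move=> i /negbTE ->; rewrite scale0r mul0mx.
  move=> i; rewrite leq_eqVlt => /predU1P [->|ij]; first by rewrite rk_last eqxx scale1r.
  by rewrite rk // (ltn_eqF ij) scale0r addr0.
by apply/eqP; rewrite -addr_eq0 addrC -krp' krp'0.
Qed.

Lemma unitmx_peval_next : peval p' \in unitmx.
Proof.
have /andP [] // : (peval p' \in unitmx) && (- ctmx Q \in unitmx).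
rewrite -unitmx_mul mulmxN -[_ *m ctmx Q]ctmxK ctmxM ctmxK -ctmxN.
by rewrite -mom_second_kind_last hH_rr (unitmx_mom_monic hD).
Qed.

Lemma mom_reproducing_sub : mom k y 0 - mom k y' 0 = - (invmx (peval p') *m Q).
Proof.
have p'Q : peval p' *m ctmx Q = - mom h r j.
  by rewrite -hH_rr mom_second_kind_last ctmxN ctmxM ctmxK opprK.
pose d l := (y l - y' l) + invmx (peval p') *m r l.
have dd : deg_lt d j.+1.
  by move=> l jl; rewrite /d dy ?dy' ?dr // 1?ltnW // mulmx0 subrr addr0.
have d0 i : (i < j)%N -> mom h d i = 0.
  move=> ij; rewrite momD mom_mull momB yE 1?ltnW // y'E // r0 //.
  by rewrite mulmx0 subrr addr0.
have d_eq0 : forall l, d l = 0.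
  apply: (definite_mom_eq0 hD (ltnSn j) dd) => i.
  rewrite leq_eqVlt => /predU1P [->|]; last exact: d0.
  rewrite -(hform_monic jN' dr rj d0) hformD hform_mull hformB hrr.
  have -> : hform h y' r = 0.
    by rewrite -(ctmx_hform N hH dr (deg_ltS dy')) (hform_orth dy' r0) ctmx0.
  have -> : hform h y r = ctmx Q.
    rewrite (hform_momE dr yE) /mom ctmx_sum; apply: eq_bigr => l _.
    rewrite addn0 ctmxM; case: (leqP l j) => lj; first by rewrite kH' //; lia.
    by rewrite dr // ctmx0 !mulmx0.
  by rewrite -[ctmx Q](mulKmx unitmx_peval_next) p'Q mulmxN subr0 addNr.
have -> : mom k y 0 - mom k y' 0 = mom k (fun l => y l - y' l) 0 by rewrite momB.
rewrite -mulmxN -momN -mom_mull; apply: eq_mom => l.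
by have /eqP := d_eq0 l; rewrite addr_eq0 => /eqP ->; rewrite mulmxN.
Qed.

End ChristoffelIdentities.

Section HankelMoments.
Variables (C : numClosedFieldType) (q N : nat).
Local Notation bd := (bd q).
Local Notation mom := (mom N).
Local Notation hform := (hform N).

Lemma mul_hankelE r m f (X : 'M[C]_(r, bd m)) : (m <= N)%N ->
  X *m hankel m f = mxrow_seq m (mom f (blocks X)).
Proof.
move=> mN; rewrite -{1}(mxrow_seq_blocks X) mul_mxrow_seq_hankel.
apply: eq_mxrow_seq => i _.
rewrite /mom (sum_ord_trunc (F := fun l => blocks X l *m f (l + i)%N) mN) // => l ml.
by rewrite blocks_ge // mul0mx.
Qed.

Lemma hform_hankelE r r' m f (c : nat -> 'M[C]_(r, q)) (d : nat -> 'M[C]_(r', q)) :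
  (m <= N)%N -> deg_lt c m -> deg_lt d m ->
  mxrow_seq m c *m hankel m f *m ctmx (mxrow_seq m d) = hform f c d.
Proof.
move=> mN dc dd; rewrite mul_hankelE // ctmx_mxrow_seq mul_mxrow_seq_mxcol_seq.
rewrite /hform (sum_ord_trunc (F := fun i => mom f c i *m ctmx (d i)) mN); last first.
  by move=> i mi; rewrite dd // ctmx0 mulmx0.
apply: eq_bigr => i _; congr (_ *m _); apply: eq_bigr => l _.
by rewrite blocks_mxrow_seq; case: ltnP => // /dc ->.
Qed.

Lemma posdef_hankel_definite m (f : nat -> 'M[C]_q) : posdef (hankel m f) -> (m <= N)%N ->
  hform_definite N f m.
Proof.
move=> [_ fpos] mN r c dc cc0 l.
set X := mxrow_seq m c.
have X0 : X = 0.
  apply/row_matrixP => t; rewrite row0; apply/eqP; apply: contraT => Xt0.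
  have /fpos : ctmx (row t X) != 0.
    by apply: contra Xt0 => /eqP e; rewrite -(ctmxK (row t X)) e ctmx0.
  rewrite ctmxK !rowE ctmxM -!mulmxA (mulmxA X) (mulmxA (X *m _)).
  by rewrite hform_hankelE // cc0 mul0mx mulmx0 mxE ltxx.
case: (ltnP l m) => lm; last exact: dc.
by have := blocks_mxrow_seq m c l; rewrite -/X X0 lm => <-; exact: blocks0.
Qed.

Lemma hform_definite_le (f : nat -> 'M[C]_q) m m' : (m' <= m)%N ->
  hform_definite N f m -> hform_definite N f m'.
Proof. by move=> m'm fD r c dc; apply: fD => l ml; apply/dc/(leq_trans m'm). Qed.

Lemma unitmx_hankel m (f : nat -> 'M[C]_q) : hform_definite N f m -> (m <= N)%N ->
  hankel m f \in unitmx.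
Proof.
move=> fD mN; apply: row_kernel0_unitmx => v vH.
have dv : deg_lt (blocks v) m by move=> l; apply: blocks_ge.
have v0 : forall l, blocks v l = 0.
  by apply: fD => //; rewrite -(hform_hankelE (m := m)) // mxrow_seq_blocks vH mul0mx.
rewrite -(mxrow_seq_blocks v); apply/matrixP => i t; by rewrite mxE v0 !mxE.
Qed.

Lemma mom_hankel_inv r m f (Z : 'M[C]_(r, bd m)) : hankel m f \in unitmx ->
  (m <= N)%N -> forall i, (i < m)%N ->
  mom f (blocks (Z *m invmx (hankel m f))) i = blocks Z i.
Proof.
move=> fU mN i im.
have := mul_hankelE f (Z *m invmx (hankel m f)) mN; rewrite mulmxKV // => ZE.
by rewrite [in RHS]ZE blocks_mxrow_seq im.
Qed.

Lemma monic_orth_hankel m (f : nat -> 'M[C]_q) :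
  hankel m f \in unitmx -> (m < N)%N ->
  (forall i, (i < m)%N -> ctmx (f (m + i)%N) = f (m + i)%N) ->
  let Y := bcol m (fun l => f (m + l)%N) in
  let c := blocks (rowI (- (ctmx Y *m invmx (hankel m f)))) in
  [/\ deg_lt c m.+1, c m = 1%:M & forall i, (i < m)%N -> mom f c i = 0].
Proof.
move=> fU mN fH Y c.
set X := - (ctmx Y *m invmx (hankel m f)).
have cE l : c l = blocks X l + (if l == m then 1%:M else 0).
  rewrite /c rowI_mxrow_seq blocks_mxrow_seq.
  case: (ltngtP l m) => lm.
  - by rewrite ltnS ltnW // addr0.
  - by rewrite ltnNge lm /= blocks_ge 1?ltnW // addr0.
  - by rewrite lm ltnSn blocks_ge // add0r.
split.
- by move=> l ml; rewrite cE blocks_ge 1?ltnW // (gtn_eqF ml) addr0.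
- by rewrite cE eqxx blocks_ge // add0r.
move=> i im; rewrite (eq_mom N f i cE) momD.
have -> : mom f (fun l => if l == m then 1%:M else 0) i = f (m + i)%N.
  pose F l := (if l == m then 1%:M else 0) *m f (l + i)%N.
  rewrite /mom (@sum_ord_single _ _ F m mN) /F ?eqxx ?mul1mx // => l /negbTE ->.
  by rewrite mul0mx.
rewrite /X -mulNmx mom_hankel_inv ?(ltnW mN) //.
rewrite (_ : Y = mxcol_seq m (fun l => f (m + l)%N)) //.
by rewrite blocksN ctmx_mxcol_seq blocks_mxrow_seq im fH // addNr.
Qed.

Lemma mul_mxrow_seq_mom0 m (c : nat -> 'M[C]_q) f : deg_lt c m -> (m <= N)%N ->
  mxrow_seq m c *m mxcol_seq m f = mom f c 0.
Proof.
move=> dc mN; rewrite mul_mxrow_seq_mxcol_seq /mom.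
rewrite (sum_ord_trunc (F := fun l => c l *m f (l + 0)%N) mN).
  by apply: eq_bigr => l _; rewrite addn0.
by move=> l ml; rewrite dc // mul0mx.
Qed.

Lemma mul_mxrow_seq_powers m (c : nat -> 'M[C]_q) (a : C) : deg_lt c m -> (m <= N)%N ->
  mxrow_seq m c *m mxcol_seq m (fun l => a ^+ l *: 1%:M) = peval N a c.
Proof.
move=> dc mN; rewrite mul_mxrow_seq_mxcol_seq /peval.
rewrite (sum_ord_trunc (F := fun l => a ^+ l *: c l) mN).
  by apply: eq_bigr => l _; rewrite -scalemxAr mulmx1.
by move=> l ml; rewrite dc // scaler0.
Qed.

End HankelMoments.

Section DSMParameters.
Variables (C : numClosedFieldType) (q n : nat) (s : nat -> 'M[C]_q) (a b : C).
Hypotheses (aR : a^* = a) (bR : b^* = b) (n_gt0 : (0 < n)%N).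
Hypothesis sH : forall i, (i <= 2 * n + 1)%N -> hermmx (s i).
Hypothesis H2_posdef : posdef (H2 s a b n.-1).
Hypothesis K1_posdef : posdef (K1 s b n).

Local Notation N := n.+2.
Local Notation mom := (mom N).
Local Notation peval := (peval N a).

Let k i := b *: s i - s i.+1.
Let h := shat s a b.

Let hk i : h i = k i.+1 - a *: k i.
Proof. by apply/matrixP => x y; rewrite /h /k /shat !mxE; ring. Qed.

Let kH i : (i <= 2 * n)%N -> ctmx (k i) = k i.
Proof. by move=> i_le; rewrite /k ctmxB ctmxZ bR !sH //; lia. Qed.

Let hH i : (i < 2 * n)%N -> ctmx (h i) = h i.
Proof. by move=> i_lt; rewrite hk ctmxB ctmxZ aR !kH //; lia. Qed.

Let kD : hform_definite N k n.+1.
Proof. exact: posdef_hankel_definite K1_posdef _. Qed.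

Let hD : hform_definite N h n.
Proof. by rewrite -(prednK n_gt0); apply: posdef_hankel_definite H2_posdef _; lia. Qed.

Let delta0 l : 'M[C]_q := if l == 0%N then 1%:M else 0.

Definition monicK j := if j is j'.+1
  then blocks (rowI (- (ctmx (Yt1 s b j'.+1) *m invmx (K1 s b j')))) else delta0.
Definition monicH j := if j is j'.+1
  then blocks (rowI (- (ctmx (Y2 s a b j'.+1) *m invmx (H2 s a b j')))) else delta0.
Definition reprK j :=
  blocks (ctmx (mxcol_seq j.+1 (fun l => a ^+ l *: 1%:M)) *m invmx (K1 s b j)).
Definition reprH j := blocks (ctmx (mxcol_seq j.+1 k) *m invmx (H2 s a b j)).
Definition prev_seq (c : nat -> nat -> 'M[C]_q) j :=
  if j is j'.+1 then c j' else fun _ => 0.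

Lemma Rmx_u2 j : Rmx q j a *m (u2 s a b j + a *: (vmx C q j *m s 0)) =
  - mxcol_seq j.+1 k.
Proof.
have E : (1%:M - a *: Tmx C q j) *m (- mxcol_seq j.+1 k) =
         u2 s a b j + a *: (vmx C q j *m s 0).
  rewrite mulmxN mul_1_subZ_Tmx mxcol_seqN vmxE mxcol_seq_mul mxcol_seqZ /u2.
  rewrite (_ : bcol _ _ = mxcol_seq j.+1
    (fun l => if l is l'.+1 then - shat s a b l' else u20 s a b)) //.
  rewrite mxcol_seqD; apply: eq_mxcol_seq => -[|l] _ /=.
    by rewrite mul1mx scaler0 subr0 /u20 /k; apply/matrixP => x y; rewrite !mxE; ring.
  by rewrite mul0mx scaler0 addr0 -/h hk opprB.
by rewrite /Rmx -E mulKmx // unitmx_1_subZ_Tmx.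
Qed.

Lemma Gamma1_peval j : (j <= n)%N -> Gamma1 s b j a = peval (monicK j).
Proof.
case: j => [|j] jn.
  rewrite /peval (@sum_ord_single _ _ (fun l => a ^+ l *: delta0 l) 0) //.
    by rewrite /delta0 eqxx expr0 scale1r.
  by move=> l /negbTE l0; rewrite /delta0 l0 scaler0.
rewrite /Gamma1 -mulmxA Rmx_vmx -[rowI _]mxrow_seq_blocks.
rewrite (mul_mxrow_seq_powers (N := N)) //; last by lia.
by move=> l; apply: blocks_ge.
Qed.

Lemma Q2_mom j : (j <= n)%N -> Q2 s a b j a = mom k (monicH j) 0.
Proof.
case: j => [|j] jn.
  rewrite /mom (@sum_ord_single _ _ (fun l => delta0 l *m k (l + 0)%N) 0) //.
    rewrite /delta0 eqxx mul1mx /Q2 /u20 /k.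
    by apply/matrixP => x y; rewrite !mxE; ring.
  by move=> l /negbTE l0; rewrite /delta0 l0 mul0mx.
rewrite /Q2 -mulmxA Rmx_u2 mulmxN opprK -[rowI _]mxrow_seq_blocks.
rewrite (mul_mxrow_seq_mom0 (N := N)) //; last by lia.
by move=> l; apply: blocks_ge.
Qed.

Lemma ctmx_quad m r (A : 'M[C]_m) (B : 'M[C]_(m, r)) (X : 'M[C]_m) :
  ctmx B *m ctmx A *m X *m A *m B = ctmx (A *m B) *m X *m (A *m B).
Proof. by rewrite ctmxM !mulmxA. Qed.

Lemma mu_peval j : (j <= n)%N -> mu s a b j = peval (reprK j).
Proof.
move=> jn; rewrite /mu ctmx_quad Rmx_vmx -[_ *m invmx _]mxrow_seq_blocks.
rewrite (mul_mxrow_seq_powers (N := N)) //; last by lia.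
by move=> l; apply: blocks_ge.
Qed.

Lemma lambda_mom j : (j <= n)%N -> lambda s a b j = mom k (reprH j) 0.
Proof.
move=> jn; rewrite /lambda ctmx_quad Rmx_u2 ctmxN !mulNmx mulmxN opprK.
rewrite -[_ *m invmx _]mxrow_seq_blocks.
rewrite (mul_mxrow_seq_mom0 (N := N)) //; last by lia.
by move=> l; apply: blocks_ge.
Qed.

Lemma monicK_spec j : (j <= n)%N ->
  [/\ deg_lt (monicK j) j.+1, monicK j j = 1%:M &
      forall i, (i < j)%N -> mom k (monicK j) i = 0].
Proof.
case: j => [|j] jn; first by split => // -[].
apply: monic_orth_hankel => [||i ij]; last by apply: kH; lia.
  by apply: unitmx_hankel (hform_definite_le _ kD) _; lia.
by lia.
Qed.

Lemma monicH_spec j : (j <= n.-1)%N ->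
  [/\ deg_lt (monicH j) j.+1, monicH j j = 1%:M &
      forall i, (i < j)%N -> mom h (monicH j) i = 0].
Proof.
case: j => [|j] jn; first by split => // -[].
apply: monic_orth_hankel => [||i ij]; last by apply: hH; lia.
  by apply: unitmx_hankel (hform_definite_le _ hD) _; lia.
by lia.
Qed.

Lemma reprK_spec j : (j <= n)%N -> deg_lt (reprK j) j.+1 /\
  forall i, (i <= j)%N -> mom k (reprK j) i = a ^+ i *: 1%:M.
Proof.
move=> jn; split => [l|i ij]; first exact: blocks_ge.
have K1_unit : K1 s b j \in unitmx.
  by apply: unitmx_hankel (hform_definite_le _ kD) _; lia.
rewrite mom_hankel_inv //; last lia.
by rewrite ctmx_mxcol_seq blocks_mxrow_seq ltnS ij ctmxZ ctmx1 rmorphXn /= aR.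
Qed.

Lemma reprH_spec j : (j <= n.-1)%N -> deg_lt (reprH j) j.+1 /\
  forall i, (i <= j)%N -> mom h (reprH j) i = k i.
Proof.
move=> jn; split => [l|i ij]; first exact: blocks_ge.
have H2_unit : H2 s a b j \in unitmx.
  by apply: unitmx_hankel (hform_definite_le _ hD) _; lia.
rewrite mom_hankel_inv //; last lia.
by rewrite ctmx_mxcol_seq blocks_mxrow_seq ltnS ij kH //; lia.
Qed.

Lemma prev_reprK_spec j : (j <= n)%N -> deg_lt (prev_seq reprK j) j /\
  forall i, (i < j)%N -> mom k (prev_seq reprK j) i = a ^+ i *: 1%:M.
Proof.
case: j => [|j] jn; first by split => // l.
by have [] := reprK_spec (ltnW jn).
Qed.

Lemma prev_reprH_spec j : (j <= n.-1)%N -> deg_lt (prev_seq reprH j) j /\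
  forall i, (i < j)%N -> mom h (prev_seq reprH j) i = k i.
Proof.
case: j => [|j] jn; first by split => // l.
by have [] := reprH_spec (ltnW jn).
Qed.

Lemma mbold_peval j : (j <= n)%N ->
  mbold s a b j = peval (reprK j) - peval (prev_seq reprK j).
Proof.
case: j => [|j] jn; first by rewrite /= peval0 subr0 mu_peval.
by rewrite /mbold !mu_peval // ltnW.
Qed.

Lemma lbold_mom j : (j <= n)%N ->
  lbold s a b j = mom k (reprH j) 0 - mom k (prev_seq reprH j) 0.
Proof.
case: j => [|j] jn; first by rewrite /= mom0 subr0 lambda_mom.
by rewrite /lbold !lambda_mom // ltnW.
Qed.

Lemma dsm_parameter_identities j : (j <= n.-1)%N ->
  [/\ Q2 s a b j a \in unitmx,
      mbold s a b j = invmx (Q2 s a b j a) *m Gamma1 s b j a,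
      Gamma1 s b j.+1 a \in unitmx &
      lbold s a b j = - (invmx (Gamma1 s b j.+1 a) *m Q2 s a b j a)].
Proof.
move=> jn; have jn' : (j <= n)%N by lia.
have jn1 : (j.+1 <= n)%N by lia.
have [dp pj p0] := monicK_spec jn'.
have [dp' p'j p'0] := monicK_spec jn1.
have [dr rj r0] := monicH_spec jn.
have [dz zE] := reprK_spec jn'; have [dz' z'E] := prev_reprK_spec jn'.
have [dy yE] := reprH_spec jn; have [dy' y'E] := prev_reprH_spec jn.
have kH' i : (i <= 2 * j.+1)%N -> ctmx (k i) = k i by move=> ?; apply: kH; lia.
have hH' i : (i <= 2 * j)%N -> ctmx (h i) = h i by move=> ?; apply: hH; lia.
have kD' : hform_definite N k j.+1 by apply: hform_definite_le kD; lia.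
have hD' : hform_definite N h j.+1 by apply: hform_definite_le hD; lia.
have jN : (j.+1 < N)%N by lia.
rewrite (Q2_mom jn') (Gamma1_peval jn') (Gamma1_peval jn1).
rewrite (mbold_peval jn') (lbold_mom jn'); split.
- exact: unitmx_mom_second_kind aR hk kH' kD' jN dp pj p0 dr rj r0.
- exact: peval_reproducing_sub aR hk kH' kD' jN dp pj p0 dr rj r0 dz dz' zE z'E.
- exact: unitmx_peval_next aR hk kH' hH' hD' jN dp' p'j p'0 dr rj r0.
- exact: mom_reproducing_sub aR hk kH' hH' hD' jN dp' p'j p'0 dr rj r0 dy dy' yE y'E.
Qed.

End DSMParameters.

Theorem mainTheorem10 (C : numClosedFieldType) (q n : nat)
    (s : nat -> 'M[C]_q) (a b : C) :
  (0 < q)%N -> (0 < n)%N ->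
  a \is Num.real -> b \is Num.real -> a < b ->
  (forall i, (i <= 2 * n + 1)%N -> hermmx (s i)) ->
  posdef (H1 s n) -> posdef (H2 s a b n.-1) ->
  posdef (K1 s b n) -> posdef (K2 s a n) ->
  (forall j, (j <= n.-1)%N ->
     [/\ Q2 s a b j a \in unitmx,
         mbold s a b j = invmx (Q2 s a b j a) *m Gamma1 s b j a,
         Gamma1 s b j.+1 a \in unitmx &
         lbold s a b j = - (invmx (Gamma1 s b j.+1 a) *m Q2 s a b j a)])
  /\ mbold s a b 0 = invmx (Q2 s a b 0 a).
Proof.
move=> _ n_gt0 /conj_Creal aR /conj_Creal bR _ sH _ H2pd K1pd _.
have params := dsm_parameter_identities aR bR n_gt0 sH H2pd K1pd.
split=> //; have [_ -> _ _] := params 0%N (leq0n _).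
by rewrite mulmx1.
Qed.
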